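(* Let $D$ be a finite-dimensional division $\mathbb{R}$-algebra, $n\ge 2$, and let $\mathbf{H}$ be an algebraic $\mathbb{R}$-group in the isogeny class of $\mathrm{SL}_{D^n}$ or $\mathrm{GL}_{D^n}$, with standard projective representation $\rho_{\mathrm{std}}:\mathbf{H}\to\mathrm{PGL}_{D^n}$. Let $h\in\mathbf{H}(\mathbb{R})$ be non-central. Then for every $p\in\mathbb{P}(D^n)$, the span of $\{\rho_{\mathrm{std}}(xhx^{-1})p: x\in\mathbf{H}(\mathbb{R})\}$ is the whole of $\mathbb{P}(D^n)$.
   Context: $D^n$ is viewed as a right $D$-module; $\mathrm{GL}_{D^n}$ ($\mathrm{SL}_{D^n}$) is the $\mathbb{R}$-group of $D$-linear automorphisms (of reduced norm $1$), $\mathrm{PGL}_{D^n}$ the quotient of $\mathrm{GL}_{D^n}$ by its center, and $\mathbb{P}(D^n)$ the set of $1$-dimensional right $D$-submodules; span means smallest $D$-subspace containing the points. The standard projective representation is the canonical morphism $\mathbf{H}\to\mathrm{PGL}_{D^n}$. *)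

From HB Require Import structures.
From mathcomp Require Import all_boot all_order all_algebra all_field.
From mathcomp Require Import monoid.
From mathcomp Require Import reals.
Set Implicit Arguments. Unset Strict Implicit. Unset Printing Implicit Defensive.
Import GRing.Theory.
Local Open Scope ring_scope.

Definition division_algebra (R : fieldType) (D : falgType R) : Prop :=
  forall x : D, x != 0 -> x \is a GRing.unit.

(* D^n is realized as column vectors 'cV[D]_n, viewed as a RIGHT D-module:
   v . a := v *m a%:M  (a%:M is the 1x1 matrix with entry a).
   D-linear endomorphisms of the right module D^n = left multiplication by
   n x n matrices over D. *)
Definition rscale (D : ringType) (n : nat) (v : 'cV[D]_n) (a : D) : 'cV[D]_n :=
  v *m (a%:M : 'M[D]_1).

Definition invertible_mx (D : ringType) (n : nat) (A : 'M[D]_n) : Prop :=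
  exists B : 'M[D]_n, A *m B = 1%:M /\ B *m A = 1%:M.

(* The center of GL_{D^n}(R): scalar matrices c%:M with c a nonzero central
   element of D. *)
Definition central_elt (D : ringType) (c : D) : Prop := forall d : D, c * d = d * c.

(* Equality in PGL_{D^n}(R) = GL_{D^n}(R) / center. *)
Definition proj_eq (D : ringType) (n : nat) (A B : 'M[D]_n) : Prop :=
  exists c : D, central_elt c /\ c != 0 /\ A = c%:M *m B.

(* Elementary transvections 1 + a E_ij (i <> j); they generate SL_{D^n}(R). *)
Definition transvection (D : ringType) (n : nat) (i j : 'I_n) (a : D) : 'M[D]_n :=
  1%:M + a *: delta_mx i j.

(* For points of
   P(D^n) (right lines v D, v <> 0) the span of a set of points is the span of
   any set of representatives. *)
Definition rspan_full (D : ringType) (n : nat) (S : 'cV[D]_n -> Prop) : Prop :=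
  forall w : 'cV[D]_n, exists (k : nat) (vs : 'I_k -> 'cV[D]_n) (cs : 'I_k -> D),
    (forall i, S (vs i)) /\ w = \sum_(i < k) rscale (vs i) (cs i).

(* Abstract model of "H an R-group in the isogeny class of SL_{D^n} or GL_{D^n}
   with standard projective representation rho_std : H -> PGL_{D^n}", at the
   level of real points: a group Hr (= H(R)) with a map rho sending each element
   to a representative matrix in GL_{D^n}(R) of rho_std(h) in PGL_{D^n}(R), s.t.
   - rho is a homomorphism modulo the center (a morphism to PGL);
   - its kernel is central (isogeny: ker rho_std is central in H);
   - its image contains the image of SL_{D^n}(R) (generated by transvections). *)
Definition std_proj_rep (R : fieldType) (D : falgType R) (n : nat)
  (Hr : groupType) (rho : Hr -> 'M[D]_n) : Prop :=
  [/\ forall x, invertible_mx (rho x),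
      forall x y, proj_eq (rho (x * y)%g) (rho x *m rho y),
      forall x, proj_eq (rho x) 1%:M -> forall y, (x * y = y * x)%g &
      forall (i j : 'I_n) (a : D), i != j ->
        exists x, proj_eq (rho x) (transvection i j a)].

From HB Require Import structures.
From mathcomp Require Import all_boot all_order all_algebra all_field.
From mathcomp Require Import monoid.
From mathcomp Require Import reals.
From Stdlib Require Import Classical.
Set Implicit Arguments. Unset Strict Implicit. Unset Printing Implicit Defensive.
Import GRing.Theory.
Local Open Scope ring_scope.

(* Up to central scalars, the conjugates of [h] form a class C of matrices that
   is stable under conjugation by transvections.  A product g of transvections
   moves a basis vector e_k onto the line of p, and g^-1 C g = C, so it suffices
   that the vectors M e_k (M in C) span D^n.  If some M in C has an entry
   M_jk != 0 with j != k, conjugating M by the transvections 1 + M_jk^-1 E_ij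
   yields M e_k + e_i for every i != j, and then every basis vector.  Otherwise
   e_k is an eigenvector of all of C; conjugating by transvections then forces
   rho h to be diagonal with a constant central diagonal, i.e. h is central. *)

Section Transvections.
Variables (D : nzRingType) (n : nat).
Implicit Types (i j k : 'I_n) (a : D) (v w : 'cV[D]_n).

Lemma mulmx_scalar_entry m p (A : 'M[D]_(m, p)) (c : D) r s :
  (A *m c%:M) r s = A r s * c.
Proof.
rewrite mxE (bigD1 s) //= big1 => [|l /negbTE nls]; last first.
  by rewrite mxE nls mulr0n mulr0.
by rewrite mxE eqxx mulr1n addr0.
Qed.

Lemma delta_cV_entry i r (z : 'I_1) : (delta_mx i 0 : 'cV[D]_n) r z = (r == i)%:R.
Proof. by rewrite mxE (ord1 z) eqxx andbT. Qed.

Lemma mulmx_delta_cV_entry m (A : 'M[D]_(m, n)) i r (z : 'I_1) :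
  (A *m delta_mx i 0) r z = A r i.
Proof. by rewrite -colE mxE. Qed.

Lemma cV_sum_delta w : w = \sum_(i < n) delta_mx i 0 *m (w i 0)%:M.
Proof.
apply/matrixP => r z; rewrite (ord1 z) summxE (bigD1 r) //= big1 => [|i nir].
  by rewrite mulmx_scalar_entry delta_cV_entry eqxx mul1r addr0.
by rewrite mulmx_scalar_entry delta_cV_entry eq_sym (negbTE nir) mul0r.
Qed.

Lemma central_scalar_mxC m p (A : 'M[D]_(m, p)) (c : D) :
  central_elt c -> c%:M *m A = A *m c%:M.
Proof.
by move=> cc; apply/matrixP => r s; rewrite mulmx_scalar_entry mul_scalar_mx mxE.
Qed.

Lemma transvection_cV i j a v :
  transvection i j a *m v = v + delta_mx i 0 *m (a * v j 0)%:M.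
Proof.
rewrite /transvection mulmxDl mul1mx; congr (_ + _).
apply/matrixP => r z; rewrite (ord1 z) mulmx_scalar_entry delta_cV_entry.
rewrite -scalemxAl mxE mxE (bigD1 j) //= big1 => [|l /negbTE nlj]; last first.
  by rewrite mxE nlj andbF mul0r.
by rewrite mxE eqxx andbT addr0; case: (r == i); rewrite ?mul1r ?mulr1 ?mul0r ?mulr0.
Qed.

Lemma transvectionK i j a : i != j ->
  transvection i j a *m transvection i j (- a) = 1%:M.
Proof.
move=> nij; have ddelta0 b : delta_mx i j *m (b *: delta_mx i j) = 0 :> 'M[D]_n.
  apply/matrixP => r s; rewrite !mxE big1 // => l _; rewrite !mxE.
  case: (l =P j) => [->|_]; last by rewrite andbF mul0r.
  by rewrite [j == i]eq_sym (negbTE nij) !mulr0.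
rewrite /transvection mulmxDl mul1mx mulmxDr mulmx1 -scalemxAl ddelta0 scaler0 addr0.
by rewrite -addrA -scalerDl addNr scale0r addr0.
Qed.

Lemma transvectionNK i j a : i != j ->
  transvection i j (- a) *m transvection i j a = 1%:M.
Proof. by move=> nij; rewrite -{2}(opprK a) transvectionK. Qed.

(* Matrices over a noncommutative ring have no [invmx], so a product of
   transvections is paired with its inverse. *)
Inductive elementary : 'M[D]_n -> 'M[D]_n -> Prop :=
| elementary1 : elementary 1%:M 1%:M
| elementaryT i j a g g' : i != j -> elementary g g' ->
    elementary (transvection i j a *m g) (g' *m transvection i j (- a)).

Lemma elementary_mulmxV g g' : elementary g g' -> g *m g' = 1%:M.
Proof.
elim=> [|i j a h h' nij _ IH]; first by rewrite mulmx1.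
by rewrite mulmxA -(mulmxA _ h) IH mulmx1 transvectionK.
Qed.

Lemma elementary_mulVmx g g' : elementary g g' -> g' *m g = 1%:M.
Proof.
elim=> [|i j a h h' nij _ IH]; first by rewrite mulmx1.
by rewrite mulmxA -(mulmxA _ (transvection i j (- a))) transvectionNK // mulmx1.
Qed.

Definition transvection_stable (C : 'M[D]_n -> Prop) :=
  forall i j a M, i != j -> C M ->
    C (transvection i j a *m M *m transvection i j (- a)).

Lemma elementary_stable C g g' : transvection_stable C -> elementary g g' ->
  forall M, C M -> C (g *m M *m g').
Proof.
move=> stC; elim=> [|i j a h h' nij _ IH] M CM; first by rewrite mul1mx mulmx1.
by have := stC i j a _ nij (IH M CM); rewrite !mulmxA.
Qed.

Lemma elementary_delta_cV k v : v k 0 = 1 ->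
  exists g g', elementary g g' /\ g *m delta_mx k 0 = v.
Proof.
move=> vk1.
have partial (s : seq 'I_n) : k \notin s -> exists g g', elementary g g' /\
    g *m delta_mx k 0 =
      delta_mx k 0 + \sum_(i <- s) delta_mx i 0 *m (v i 0)%:M :> 'cV[D]_n.
  elim: s => [_|i s IH].
    by exists 1%:M, 1%:M; rewrite mul1mx big_nil addr0; split => //; exact: elementary1.
  rewrite in_cons negb_or => /andP[nki nks].
  have [g [g' [eg gk]]] := IH nks.
  exists (transvection i k (v i 0) *m g), (g' *m transvection i k (- v i 0)).
  split; first by apply: elementaryT; rewrite eq_sym in nki.
  have sum_k0 : (\sum_(l <- s) delta_mx l 0 *m (v l 0)%:M : 'cV[D]_n) k 0 = 0.
    rewrite summxE big1_seq // => l /andP[_ ls].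
    rewrite mulmx_scalar_entry delta_cV_entry.
    by case: eqP => [ekl|]; [move: nks; rewrite ekl ls | rewrite mul0r].
  rewrite -mulmxA gk transvection_cV mxE delta_cV_entry eqxx sum_k0 addr0 mulr1.
  by rewrite big_cons -addrA; congr (_ + _); rewrite addrC.
have [|g [g' [eg gk]]] := partial [seq i <- enum 'I_n | i != k].
  by rewrite mem_filter eqxx.
exists g, g'; split => //; rewrite gk big_filter big_enum_cond.
by rewrite [RHS]cV_sum_delta [RHS](bigD1 k) //= vk1 mulmx1.
Qed.

End Transvections.

Definition central_scalar (D : nzRingType) n (A : 'M[D]_n) :=
  exists c, central_elt c /\ A = c%:M.

Section EigenColumn.
Variables (D : nzRingType) (n : nat) (C : 'M[D]_n -> Prop) (k : 'I_n).
Hypothesis C_stable : transvection_stable C.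
Hypothesis C_col_eigen : forall M, C M -> forall j, j != k -> M j k = 0.

Lemma conj_col_eigen (A g g' : 'M[D]_n) : g *m g' = 1%:M -> C (g' *m A *m g) ->
  A *m (g *m delta_mx k 0) = g *m delta_mx k 0 *m ((g' *m A *m g) k k)%:M :> 'cV[D]_n.
Proof.
move=> gg' CM; set M := g' *m A *m g.
have Mk : M *m delta_mx k 0 = delta_mx k 0 *m (M k k)%:M :> 'cV[D]_n.
  apply/matrixP => r z; rewrite mulmx_delta_cV_entry mulmx_scalar_entry delta_cV_entry.
  by case: (r =P k) => [->|/eqP nrk]; rewrite ?mul1r // mul0r C_col_eigen.
by rewrite -mulmxA -Mk /M -{1}[A]mul1mx -gg' !mulmxA.
Qed.

Lemma col_eigen_offdiag (A : 'M[D]_n) r s : C A -> r != s -> A r s = 0.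
Proof.
move=> CA; have [->|nsk nrs] := eqVneq s k; first exact: C_col_eigen.
have nks : k != s by rewrite eq_sym.
pose g : 'M[D]_n := transvection k s (-1) *m transvection s k (- - 1).
pose g' : 'M[D]_n := transvection s k (-1) *m transvection k s 1.
have gg' : g *m g' = 1%:M.
  rewrite /g /g' -mulmxA (mulmxA (transvection s k _)) transvectionNK //.
  by rewrite mul1mx transvectionNK.
have Cg : C (g' *m A *m g).
  by have := C_stable (-1) nsk (C_stable 1 nks CA); rewrite /g /g' !mulmxA.
have gk : g *m delta_mx k 0 = delta_mx s 0 :> 'cV[D]_n.
  have tk : transvection s k 1 *m delta_mx k 0
      = delta_mx k 0 + delta_mx s 0 :> 'cV[D]_n.
    by rewrite transvection_cV delta_cV_entry eqxx mulr1 mulmx1.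
  rewrite /g opprK -mulmxA tk transvection_cV mxE !delta_cV_entry eqxx (negbTE nsk).
  by rewrite add0r mulr1 raddfN mulmxN mulmx1 addrAC addrN add0r.
move: (conj_col_eigen gg' Cg); rewrite gk => /(congr1 (fun x : 'cV[D]_n => x r 0)).
by rewrite mulmx_delta_cV_entry mulmx_scalar_entry delta_cV_entry (negbTE nrs) mul0r.
Qed.

Lemma col_eigen_diag_comm (A : 'M[D]_n) j d : C A -> j != k -> A j j * d = d * A k k.
Proof.
move=> CA njk; have nkj : k != j by rewrite eq_sym.
have Cg : C (transvection j k (- d) *m A *m transvection j k d).
  by have := C_stable (- d) njk CA; rewrite opprK.
move: (conj_col_eigen (transvectionK d njk) Cg); set mu := (_ k k).
rewrite transvection_cV delta_cV_entry eqxx mulr1 mulmxDr mulmxDl !mulmxA => e.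
have := congr1 (fun x : 'cV[D]_n => x k 0) e.
have := congr1 (fun x : 'cV[D]_n => x j 0) e.
rewrite /= ![fun_of_matrix (_ + _) _ _]mxE !mulmx_scalar_entry.
rewrite !mulmx_delta_cV_entry !delta_cV_entry !eqxx (negbTE njk) (negbTE nkj).
rewrite (col_eigen_offdiag CA njk) (col_eigen_offdiag CA nkj).
by rewrite !(mul0r, mul1r, add0r, addr0) => -> ->.
Qed.

Lemma col_eigen_central_scalar (A : 'M[D]_n) k1 : C A -> k1 != k -> central_scalar A.
Proof.
move=> CA nk1; have diag j : A j j = A k k.
  have [->|njk] := eqVneq j k; first by [].
  by rewrite -[A j j]mulr1 (col_eigen_diag_comm 1 CA njk) mul1r.
exists (A k k); split.
  by move=> d; rewrite -{1}(diag k1) (col_eigen_diag_comm d CA nk1).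
apply/matrixP => r s; rewrite mxE; have [->|nrs] := eqVneq r s.
  by rewrite diag mulr1n.
by rewrite mulr0n col_eigen_offdiag.
Qed.

End EigenColumn.

Section ColumnSpan.
Variables (D : unitRingType) (n : nat) (C : 'M[D]_n -> Prop) (k : 'I_n).
Variable P : 'cV[D]_n -> Prop.
Hypothesis D_division : forall x : D, x != 0 -> x \is a GRing.unit.
Hypothesis P0 : P 0.
Hypothesis PD : forall u v, P u -> P v -> P (u + v).
Hypothesis PZ : forall u c, P u -> P (u *m c%:M).
Hypothesis C_stable : transvection_stable C.
Hypothesis C_col : forall M, C M -> P (M *m delta_mx k 0).

Lemma P_sub u v : P u -> P v -> P (u - v).
Proof. by move=> Pu Pv; rewrite -[v]mulmx1 -mulmxN -raddfN; apply/PD/PZ. Qed.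

Lemma P_sum (I : finType) (Q : pred I) (F : I -> 'cV[D]_n) :
  (forall i, Q i -> P (F i)) -> P (\sum_(i | Q i) F i).
Proof. exact: big_ind. Qed.

Lemma P_full_of_delta : (forall i, P (delta_mx i 0)) -> forall w, P w.
Proof. by move=> Pe w; rewrite [w]cV_sum_delta; apply: P_sum => i _; apply: PZ. Qed.

Lemma P_full_of_offdiag M j : C M -> j != k -> M j k != 0 -> forall w, P w.
Proof.
move=> CM njk Mjk; set v : 'cV[D]_n := M *m delta_mx k 0.
have vj : v j 0 = M j k by rewrite mulmx_delta_cV_entry.
have vj_unit : v j 0 \is a GRing.unit by rewrite vj D_division.
have Pv : P v by apply: C_col.
have Pe i : i != j -> P (delta_mx i 0).
  move=> nij; have := C_col (C_stable (v j 0)^-1 nij CM).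
  rewrite -!mulmxA [transvection _ _ (- _) *m _]transvection_cV delta_cV_entry.
  rewrite (negbTE njk) mulr0 raddf0 mulmx0 addr0 transvection_cV -/v.
  rewrite mulVr // mulmx1 => Pvi.
  by have := P_sub Pvi Pv; rewrite addrC addKr.
have Pej : P (delta_mx j 0).
  have Pvj : P (delta_mx j 0 *m (v j 0)%:M).
    have Prest : P (\sum_(i | i != j) delta_mx i 0 *m (v i 0)%:M).
      by apply: P_sum => i nij; apply/PZ/Pe.
    by have := P_sub Pv Prest; rewrite {1}[v]cV_sum_delta (bigD1 j) //= addrK.
  by have := PZ (v j 0)^-1 Pvj; rewrite -mulmxA -scalar_mxM mulrV // mulmx1.
apply: P_full_of_delta => i; have [->|] := eqVneq i j; [exact: Pej | exact: Pe].
Qed.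

Lemma P_full_of_noncentral A k1 : C A -> ~ central_scalar A -> k1 != k ->
  forall w, P w.
Proof.
move=> CA ncA nk1; have [[M [j [CM njk Mjk]]]|no_offdiag] :=
  classic (exists M j, [/\ C M, j != k & M j k != 0]).
  exact: P_full_of_offdiag CM njk Mjk.
exfalso; apply/ncA/(col_eigen_central_scalar C_stable _ CA nk1) => M CM j njk.
by have [|Mjk] := eqVneq (M j k) 0; last by case: no_offdiag; exists M, j.
Qed.

End ColumnSpan.

Section RightSpan.
Variables (D : nzRingType) (n : nat) (S : 'cV[D]_n -> Prop).

Definition in_rspan (w : 'cV[D]_n) : Prop :=
  exists (k : nat) (vs : 'I_k -> 'cV[D]_n) (cs : 'I_k -> D),
    (forall i, S (vs i)) /\ w = \sum_(i < k) rscale (vs i) (cs i).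

Lemma in_rspan0 : in_rspan 0.
Proof. by exists 0%N, (fun _ => 0), (fun _ => 0); split; [case | rewrite big_ord0]. Qed.

Lemma in_rspanD u v : in_rspan u -> in_rspan v -> in_rspan (u + v).
Proof.
move=> [k1 [vs1 [cs1 [S1 ->]]]] [k2 [vs2 [cs2 [S2 ->]]]].
exists (k1 + k2)%N, (fun i => match split i with inl a => vs1 a | inr b => vs2 b end),
  (fun i => match split i with inl a => cs1 a | inr b => cs2 b end).
split; first by move=> i; case: (split i).
rewrite big_split_ord; congr (_ + _); apply: eq_bigr => i _.
  by rewrite (unsplitK (inl i)).
by rewrite (unsplitK (inr i)).
Qed.

Lemma in_rspanZ u c : in_rspan u -> in_rspan (u *m c%:M).
Proof.
move=> [k [vs [cs [Svs ->]]]]; exists k, vs, (fun i => cs i * c); split => //.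
by rewrite mulmx_suml; apply: eq_bigr => i _; rewrite /rscale -mulmxA -scalar_mxM.
Qed.

Lemma in_rspan_mem v c : S v -> in_rspan (v *m c%:M).
Proof.
by move=> Sv; exists 1%N, (fun _ => v), (fun _ => c); split; rewrite ?big_ord1.
Qed.

End RightSpan.

Section ProjectiveEquality.
Variables (D : unitRingType) (n : nat).
Hypothesis D_division : forall x : D, x != 0 -> x \is a GRing.unit.
Implicit Types A B : 'M[D]_n.

Lemma central_eltM (c d : D) : central_elt c -> central_elt d -> central_elt (c * d).
Proof. by move=> cc cd x; rewrite -mulrA cd mulrA cc mulrA. Qed.

Lemma central_eltV (c : D) : c \is a GRing.unit -> central_elt c -> central_elt c^-1.
Proof.
by move=> cu cc x; apply: (mulrI cu); rewrite mulVKr // mulrA cc mulrK.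
Qed.

Lemma division_mulf_neq0 (c d : D) : c != 0 -> d != 0 -> c * d != 0.
Proof.
move=> c0 d0; have cdu : c * d \is a GRing.unit by rewrite unitrMl ?D_division.
by apply: contraTneq cdu => ->; rewrite unitr0.
Qed.

Lemma proj_eq_refl A : proj_eq A A.
Proof.
exists 1; split; first by move=> d; rewrite mul1r mulr1.
by split; [exact: oner_neq0 | rewrite mul1mx].
Qed.

Lemma proj_eq_sym A B : proj_eq A B -> proj_eq B A.
Proof.
move=> [c [cc [c0 ->]]]; have cu := D_division c0.
exists c^-1; split; first exact: central_eltV.
split; first by rewrite invr_eq0.
by rewrite mulmxA -scalar_mxM mulVr // mul1mx.
Qed.

Lemma proj_eq_trans A B C : proj_eq A B -> proj_eq B C -> proj_eq A C.
Proof.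
move=> [c [cc [c0 ->]]] [d [cd [d0 ->]]].
exists (c * d); split; first exact: central_eltM.
by split; [exact: division_mulf_neq0 | rewrite scalar_mxM mulmxA].
Qed.

Lemma proj_eqM A A' B B' :
  proj_eq A A' -> proj_eq B B' -> proj_eq (A *m B) (A' *m B').
Proof.
move=> [c [cc [c0 ->]]] [d [cd [d0 ->]]].
exists (c * d); split; first exact: central_eltM.
split; first exact: division_mulf_neq0.
by rewrite scalar_mxM -!mulmxA; congr (_ *m _); rewrite !mulmxA central_scalar_mxC.
Qed.

End ProjectiveEquality.

Section StdProjRep.
Variables (D : unitRingType) (n : nat) (Hr : groupType) (rho : Hr -> 'M[D]_n).
Hypothesis D_division : forall x : D, x != 0 -> x \is a GRing.unit.
Hypothesis rho_invertible : forall x, invertible_mx (rho x).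
Hypothesis rhoM : forall x y, proj_eq (rho (x * y)%g) (rho x *m rho y).
Hypothesis rho_transvection : forall i j a, i != j ->
  exists x, proj_eq (rho x) (transvection i j a).

Definition proj_conj_class (h : Hr) (M : 'M[D]_n) : Prop :=
  exists y, proj_eq M (rho (y * h * y^-1)%g).

Lemma proj_eq_rho1 : proj_eq (rho 1%g) 1%:M.
Proof.
have [c [cc [c0 rho1]]] := rhoM 1%g 1%g; rewrite mulg1 in rho1.
have [B [rhoB _]] := rho_invertible 1%g.
apply: proj_eq_sym => //; exists c; split => //; split => //.
by rewrite -rhoB {1}rho1 -!mulmxA rhoB mulmx1.
Qed.

Lemma proj_eq_rhoV x (M M' : 'M[D]_n) :
  proj_eq (rho x) M -> M *m M' = 1%:M -> proj_eq (rho x^-1) M'.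
Proof.
move=> rhoxM MM'.
have : proj_eq 1%:M (rho x^-1 *m M).
  apply: proj_eq_trans (proj_eq_sym D_division proj_eq_rho1) _ => //.
  rewrite -(mulVg x); apply: proj_eq_trans (rhoM _ _) _ => //.
  exact: proj_eqM (proj_eq_refl _) rhoxM.
move=> /(proj_eqM D_division)/(_ (proj_eq_refl M')).
by rewrite mul1mx -mulmxA MM' mulmx1; apply: proj_eq_sym.
Qed.

Lemma proj_conj_class_stable h : transvection_stable (proj_conj_class h).
Proof.
move=> i j a M nij [y My]; have [x rhox] := rho_transvection a nij.
exists (x * y)%g.
have -> : (x * y * h * (x * y)^-1 = x * (y * h * y^-1) * x^-1)%g.
  by rewrite invgM !mulgA.
have rhoxV := proj_eq_rhoV rhox (transvectionK a nij).
apply: proj_eq_sym => //; apply: proj_eq_trans (rhoM _ _) _ => //.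
apply: proj_eqM => //; apply: proj_eq_trans (rhoM _ _) _ => //.
by apply: proj_eqM => //; apply: proj_eq_sym.
Qed.

Lemma in_rspan_proj_conj_class h (p : 'cV[D]_n) M c : proj_conj_class h M ->
  in_rspan (fun v => exists x, v = rho (x * h * x^-1)%g *m p) (M *m p *m c%:M).
Proof.
move=> [y [c0 [cc0 [_ ->]]]].
rewrite -!mulmxA central_scalar_mxC // -!mulmxA -scalar_mxM mulmxA.
by apply: in_rspan_mem; exists y.
Qed.

Lemma rho_noncentral h : (0 < n)%N ->
  (forall x, proj_eq (rho x) 1%:M -> forall y, (x * y = y * x)%g) ->
  ~ (forall y, (h * y = y * h)%g) -> ~ central_scalar (rho h).
Proof.
move=> n_gt0 rho_ker h_noncentral [c [cc rhoh]]; apply/h_noncentral/rho_ker.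
exists c; split => //; split; last by rewrite rhoh mulmx1.
apply/eqP => c0; have [B [rhoB _]] := rho_invertible h.
move: rhoB; rewrite rhoh c0 raddf0 mul0mx.
move=> /matrixP/(_ (Ordinal n_gt0) (Ordinal n_gt0)).
by rewrite !mxE eqxx mulr1n => /eqP; rewrite eq_sym oner_eq0.
Qed.

End StdProjRep.

Unset Implicit Arguments.

Theorem proposition3p13 (R : realType) (D : falgType R) (n : nat)
  (Hr : groupType) (rho : Hr -> 'M[D]_n) :
  division_algebra D -> (2 <= n)%N -> std_proj_rep rho ->
  forall h : Hr, ~ (forall y : Hr, (h * y = y * h)%g) ->
  forall p : 'cV[D]_n, p != 0 ->
    rspan_full (fun v : 'cV[D]_n =>
      exists x : Hr, v = rho (x * h * x^-1)%g *m p).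
Proof.
move=> D_division n_ge2 [rho_inv rhoM rho_ker rho_tr] h h_noncentral p p0.
have [k pk] : exists k, p k 0 != 0.
  apply/existsP; apply: contraNT p0 => /existsPn p_eq0.
  by apply/eqP/matrixP => r z; rewrite (ord1 z) mxE; apply/eqP/negPn/p_eq0.
have [k1 nk1] : exists k1 : 'I_n, k1 != k.
  have [k0|nk0] := eqVneq k (Ordinal (ltnW n_ge2)).
    by exists (Ordinal n_ge2); rewrite k0.
  by exists (Ordinal (ltnW n_ge2)); rewrite eq_sym.
have pk1 : (p *m ((p k 0)^-1)%:M) k 0 = 1.
  by rewrite mulmx_scalar_entry mulrV ?D_division.
have [g [g' [eg gk]]] := elementary_delta_cV pk1.
have C_stable := proj_conj_class_stable D_division rho_inv rhoM rho_tr (h := h).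
pose S v := exists x, v = rho (x * h * x^-1)%g *m p.
have full w : in_rspan S (g *m w).
  apply: (P_full_of_noncentral (P := fun w => in_rspan S (g *m w)) D_division _ _ _
    C_stable _ (A := rho h) _ _ nk1).
  - by rewrite mulmx0; apply: in_rspan0.
  - by move=> u v Su Sv; rewrite mulmxDr; apply: in_rspanD.
  - by move=> u c Su; rewrite mulmxA; apply: in_rspanZ.
  - move=> M CM; have gMg' := elementary_stable C_stable eg CM.
    have := in_rspan_proj_conj_class p (p k 0)^-1 gMg'.
    by rewrite -mulmxA -gk !mulmxA -(mulmxA (g *m M) g') (elementary_mulVmx eg) mulmx1.
  - by exists 1%g; rewrite mul1g invg1 mulg1; apply: proj_eq_refl.
  - exact: rho_noncentral (ltnW n_ge2) rho_ker h_noncentral.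
by move=> w; have := full (g' *m w); rewrite mulmxA elementary_mulmxV // mul1mx.
Qed.
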